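(* Let $\alpha,\beta,\mu$ be real parameters with $0<\alpha\leq 1$, $\beta>0$, $0<\mu\leq 1$. Define $$T(x)=\frac{(1-\beta)x^2+(1-\alpha)x+\beta}{(\mu-\beta)x^2+x+\beta-\mu+1}.$$ Then $T$ is well defined on $[0,1]$ and maps $[0,1]$ into $[0,1]$. *)

From Stdlib Require Import Reals.
Open Scope R_scope.

Definition T_num (alpha beta : R) (x : R) : R :=
  (1 - beta) * x ^ 2 + (1 - alpha) * x + beta.
Definition T_den (beta mu : R) (x : R) : R :=
  (mu - beta) * x ^ 2 + x + beta - mu + 1.
Definition T (alpha beta mu : R) (x : R) : R :=
  T_num alpha beta x / T_den beta mu x.

(** Writing [s := 1 - x^2 >= 0], the numerator of [T] is
    [beta s + x^2 + (1 - alpha) x >= 0], and the denominator exceeds it by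
    [(1 - mu) s + alpha x >= 0]; the denominator itself is
    [beta s + x + x^2 + (1 - mu) s], positive since [beta > 0] at [x = 0]
    and [x > 0] otherwise. *)

From Stdlib Require Import Reals Lra Psatz.
Open Scope R_scope.

Lemma Rdiv_in_unit_interval (n d : R) :
  0 <= n <= d -> 0 < d -> 0 <= n / d <= 1.
Proof.
  intros [Hn Hnd] Hd.
  split.
  - now apply Rle_mult_inv_pos.
  - rewrite <- (Rdiv_diag d) by lra.
    apply Rmult_le_compat_r; [|exact Hnd].
    left; now apply Rinv_0_lt_compat.
Qed.

Section T_bounds.

Variables alpha beta mu x : R.
Hypothesis x_unit : 0 <= x <= 1.

Let one_sub_sqr_ge0 : 0 <= 1 - x ^ 2.
Proof. nra. Qed.

Lemma T_den_pos : 0 < beta -> mu <= 1 -> 0 < T_den beta mu x.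
Proof.
  intros Hbeta Hmu.
  assert (E : T_den beta mu x
              = beta * (1 - x ^ 2) + x + x ^ 2 + (1 - mu) * (1 - x ^ 2))
    by (unfold T_den; ring).
  rewrite E; pose proof one_sub_sqr_ge0.
  destruct (Rle_lt_or_eq_dec 0 x (proj1 x_unit)) as [Hx | <-]; nra.
Qed.

Lemma T_num_ge0 : 0 <= beta -> alpha <= 1 -> 0 <= T_num alpha beta x.
Proof.
  intros Hbeta Halpha.
  assert (E : T_num alpha beta x = beta * (1 - x ^ 2) + x ^ 2 + (1 - alpha) * x)
    by (unfold T_num; ring).
  rewrite E; pose proof one_sub_sqr_ge0; nra.
Qed.

Lemma T_num_le_den : 0 <= alpha -> mu <= 1 -> T_num alpha beta x <= T_den beta mu x.
Proof.
  intros Halpha Hmu.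
  assert (E : T_den beta mu x - T_num alpha beta x = (1 - mu) * (1 - x ^ 2) + alpha * x)
    by (unfold T_num, T_den; ring).
  pose proof one_sub_sqr_ge0; nra.
Qed.

End T_bounds.

Theorem proposition3 (alpha beta mu : R) :
  0 < alpha <= 1 -> 0 < beta -> 0 < mu <= 1 ->
  forall x : R, 0 <= x <= 1 ->
    T_den beta mu x <> 0 /\ 0 <= T alpha beta mu x <= 1.
Proof.
  intros [Halpha0 Halpha1] Hbeta [_ Hmu] x Hx.
  pose proof (T_den_pos beta mu x Hx Hbeta Hmu) as Hden.
  split; [lra|].
  apply Rdiv_in_unit_interval; [split|exact Hden].
  - apply T_num_ge0; lra.
  - apply T_num_le_den; lra.
Qed.
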